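(* Let $\Gamma=(Q,A,E,(\delta_e)_{e\in E})$ be an MEMDP, $q\in Q$ a state, $W$ a parity objective, and $b\in\mathcal D(E)$ a prior belief with $\mathrm{Supp}(b)=E$. Then $\mathrm{val}^{\mathrm{uni}}_q(\Gamma,W)=1$ if and only if $\mathrm{val}^{\mathrm{pr}}_q(\Gamma,b,W)=1$. Moreover, for every strategy $\sigma\in\mathrm{Strat}(Q,A)$: $\mathrm{val}^{\mathrm{uni}}_q(\Gamma,\sigma,W)=1$ if and only if $\mathrm{val}^{\mathrm{pr}}_q(\Gamma,b,\sigma,W)=1$.
   Context: For a set $X$, a distribution on $X$ is a function $d:X\to[0,1]$ with countable support $\mathrm{Supp}(d)=\{x: d(x)>0\}$ and $\sum_x d(x)=1$; $\mathcal D(X)$ denotes the set of distributions. An MDP is $G=(Q,A,\delta)$ with $Q,A$ finite non-empty and $\delta:Q\times A\to\mathcal D(Q)$. Finite runs are elements of $Q\cdot(A\cdot Q)^*$, infinite runs elements of $(Q\cdot A)^\omega$. A strategy is a map $\sigma:Q\cdot(A\cdot Q)^*\to\mathcal D(A)$; $\mathrm{Strat}(Q,A)$ is the set of strategies. For $q\in Q$, $\mathbb P^\sigma_q[G,\cdot]$ is the unique probability measure on the Borel sets of infinite runs such that the cylinder of a finite run $q_0(a_1,q_1)\cdots(a_n,q_n)$ has probability $[q_0=q]\prod_{i=1}^n\sigma(q_0(a_1,q_1)\cdots(a_{i-1},q_{i-1}))(a_i)\,\delta(q_{i-1},a_i)(q_i)$; sets of infinite state sequences are measured via projection of runs onto their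 state sequences. A parity objective is given by a labelling $f:Q\to\mathbb N$: $W$ is the set of infinite state sequences whose maximal label occurring infinitely often is even. An MEMDP is $\Gamma=(Q,A,E,(\delta_e)_{e\in E})$ with $E$ a finite non-empty set of environments and each $\Gamma[e]:=(Q,A,\delta_e)$ an MDP. Values: $\mathrm{val}^{\mathrm{uni}}_q(\Gamma,\sigma,W)=\min_{e\in E}\mathbb P^\sigma_q[\Gamma[e],W]$, $\mathrm{val}^{\mathrm{uni}}_q(\Gamma,W)=\sup_\sigma \mathrm{val}^{\mathrm{uni}}_q(\Gamma,\sigma,W)$; for $b\in\mathcal D(E)$, $\mathrm{val}^{\mathrm{pr}}_q(\Gamma,b,\sigma,W)=\sum_{e\in E}b(e)\,\mathbb P^\sigma_q[\Gamma[e],W]$ and $\mathrm{val}^{\mathrm{pr}}_q(\Gamma,b,W)=\sup_\sigma\mathrm{val}^{\mathrm{pr}}_q(\Gamma,b,\sigma,W)$. *)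

From HB Require Import structures.
From mathcomp Require Import all_boot all_order all_algebra.
From mathcomp Require Import all_classical all_reals.
From mathcomp Require Import ereal measure probability.
Set Implicit Arguments. Unset Strict Implicit. Unset Printing Implicit Defensive.
Import Order.TTheory GRing.Theory Num.Theory.
Local Open Scope classical_set_scope.
Local Open Scope ring_scope.

Section Defs.
Variable R : realType.

(* distributions on a finite set (countable support is automatic) *)
Definition is_dist (T : finType) (d : T -> R) : Prop :=
  (forall x, 0 <= d x) /\ \sum_(x : T) d x = 1.

Variables (Q A : finType).

(* finite runs  q0 (a1,q1) ... (an,qn)  represented as (q0, [:: (a1,q1); ...]) *)
Definition finrun := (Q * seq (A * Q))%type.

Definition is_transition (delta : Q -> A -> Q -> R) : Prop :=
  forall q a, is_dist (delta q a).

Definition is_strategy (sigma : finrun -> A -> R) : Prop :=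
  forall h, is_dist (sigma h).

(* infinite runs (Q.A)^omega : r i = (q_i, a_{i+1}) *)
Definition runs (q0 : Q) (a0 : A) := nat -> Q * A.
HB.instance Definition _ q0 a0 := Choice.on (runs q0 a0).
HB.instance Definition _ q0 a0 := isPointed.Build (runs q0 a0) (fun=> (q0, a0)).

Definition cylinder q0 a0 (h : finrun) : set (runs q0 a0) :=
  [set r | (r 0%N).1 = h.1 /\
           [seq ((r i).2, (r i.+1).1) | i <- iota 0 (size h.2)] = h.2].

Definition cylinders q0 a0 : set (set (runs q0 a0)) := range (@cylinder q0 a0).

Definition Runs q0 a0 := g_sigma_algebraType (@cylinders q0 a0).

Fixpoint path_prob (delta : Q -> A -> Q -> R) (sigma : finrun -> A -> R)
    (q0 : Q) (past : seq (A * Q)) (cur : Q) (rest : seq (A * Q)) : R :=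
  match rest with
  | [::] => 1
  | (a, q') :: rest' =>
      sigma (q0, past) a * delta cur a q' *
      path_prob delta sigma q0 (rcons past (a, q')) q' rest'
  end.

Definition cylinder_prob (delta : Q -> A -> Q -> R) (sigma : finrun -> A -> R)
    (q : Q) (h : finrun) : R :=
  (h.1 == q)%:R * path_prob delta sigma h.1 [::] h.1 h.2.

Definition is_run_measure qp a0 (delta : Q -> A -> Q -> R)
    (sigma : finrun -> A -> R) (q : Q) (P : probability (Runs qp a0) R) : Prop :=
  forall h : finrun, P (cylinder h) = (cylinder_prob delta sigma q h)%:E.

Definition inf_often (P : nat -> Prop) : Prop :=
  forall N, exists i, (N <= i)%N /\ P i.

Definition parity (f : Q -> nat) : set (nat -> Q) :=
  [set s | exists n, ~~ odd n /\ inf_often (fun i => f (s i) = n) /\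
           forall m, inf_often (fun i => f (s i) = m) -> (m <= n)%N].

Definition on_states qp a0 (W : set (nat -> Q)) : set (Runs qp a0) :=
  [set r | W (fun i => (r i).1)].

End Defs.

(* With positive prior weights b and success probabilities p_e in [0, 1], the
   prior value sum_e b(e) p_e is 1 iff every p_e is 1, i.e. iff the universal
   value min_e p_e is 1.  For the optimal values, min_e p_e <= sum_e b(e) p_e <= 1
   gives one implication; for the other, b(e) (1 - p_e) <= 1 - sum_e b(e) p_e,
   so a strategy whose prior value exceeds 1 - eps * min_e b(e) has universal
   value at least 1 - eps.  Measurability of the parity objective comes from
   writing it through unions and intersections of cylinders. *)

From HB Require Import structures.
From mathcomp Require Import all_boot all_order all_algebra.
From mathcomp Require Import all_classical all_reals.
From mathcomp Require Import ereal measure probability.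
From mathcomp Require Import lra.

Set Implicit Arguments. Unset Strict Implicit. Unset Printing Implicit Defensive.
Import Order.TTheory GRing.Theory Num.Theory.
Local Open Scope classical_set_scope.
Local Open Scope ring_scope.

Section measurable_runs.
Variables (Q A : finType) (q0 : Q) (a0 : A).
Local Notation T := (Runs q0 a0).

Definition prefix (r : T) (n : nat) : finrun Q A :=
  ((r 0%N).1, [seq ((r j).2, (r j.+1).1) | j <- iota 0 n]).

Definition last_state (h : finrun Q A) : Q := last h.1 (unzip2 h.2).

Lemma size_prefix (r : T) n : size (prefix r n).2 = n.
Proof. by rewrite size_map size_iota. Qed.

Lemma last_state_prefix (r : T) n : last_state (prefix r n) = (r n).1.
Proof.
case: n => [//|n].
by rewrite /last_state /prefix /unzip2 -addn1 iotaD !map_cat last_cat add0n addn1.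
Qed.

Lemma cylinderE (h : finrun Q A) (r : T) :
  (cylinder h : set T) r <-> h = prefix r (size h.2).
Proof.
case: h => q s; rewrite /cylinder /prefix /=.
split => [[<- <-]|[-> e]]; first by rewrite size_map size_iota.
by split; last exact/esym.
Qed.

Lemma measurable_cylinder (h : finrun Q A) : measurable (cylinder h : set T).
Proof. by apply: sub_sigma_algebra; exists h. Qed.

Lemma measurable_state (P : pred Q) n : measurable [set r : T | P (r n).1].
Proof.
pose Hist := {h : finrun Q A | (size h.2 == n) && P (last_state h)}.
have -> : [set r : T | P (r n).1] = \bigcup_(h : Hist) cylinder (val h).
  apply/seteqP; split => [r Pr|r [[h hP] _ /cylinderE /= hr]] /=.
    have Hr : (size (prefix r n).2 == n) && P (last_state (prefix r n)).
      by rewrite size_prefix last_state_prefix eqxx.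
    exists (exist _ (prefix r n) Hr) => //.
    by apply/cylinderE; rewrite size_prefix.
  by case/andP: hP => /eqP hn; rewrite hr hn last_state_prefix.
apply: countable_bigcupT_measurable => [|h]; last exact: measurable_cylinder.
exact: countableP.
Qed.

Lemma measurable_inf_often (P : pred Q) :
  measurable [set r : T | inf_often (fun i => P (r i).1)].
Proof.
have -> : [set r : T | inf_often (fun i => P (r i).1)] =
    \bigcap_N \bigcup_(i in [set i | (N <= i)%N]) [set r : T | P (r i).1].
  apply/seteqP; split => r io N /=.
    by have [i [Ni Pi]] := io N; exists i.
  by have [i Ni Pi] := io N I; exists i.
apply: bigcapT_measurable => N; apply: bigcup_measurable => i _.
exact: measurable_state.
Qed.

Lemma measurable_parity (f : Q -> nat) :
  measurable (on_states (parity f) : set T).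
Proof.
pose IO n := [set r : T | inf_often (fun i => (f (r i).1 == n))].
have -> : (on_states (parity f) : set T) =
    \bigcup_(n in [set n | ~~ odd n])
      (IO n `&` \bigcap_(m in [set m | (n < m)%N]) ~` IO m).
  apply/seteqP; split => r /=.
    move=> [n [en [io max]]]; exists n => //; split.
      by move=> N; have [i [Ni /eqP]] := io N; exists i.
    move=> m /= nm iom; suff : (m <= n)%N by rewrite leqNgt nm.
    by apply: max => N; have [i [Ni /eqP]] := iom N; exists i.
  move=> [n en [io max]]; exists n; split => //; split.
    by move=> N; have [i [Ni /eqP]] := io N; exists i.
  move=> m iom; rewrite leqNgt; apply/negP => nm; apply: (max m nm) => N.
  by have [i [Ni /eqP]] := iom N; exists i.
apply: bigcup_measurable => n _; apply: measurableI.
  exact: (measurable_inf_often (fun x => f x == n)).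
apply: bigcap_measurableType => m _; apply: measurableC.
exact: (measurable_inf_often (fun x => f x == m)).
Qed.

End measurable_runs.

Section weighted_mean.
Variables (R : realFieldType) (I : finType) (w x : I -> R).
Hypotheses (w_gt0 : forall i, 0 < w i) (sum_w : \sum_i w i = 1).
Hypothesis x_le1 : forall i, x i <= 1.

Lemma wmean_le1 : \sum_i w i * x i <= 1.
Proof.
rewrite -sum_w; apply: ler_sum => i _.
by rewrite ler_piMr ?x_le1 ?ltW.
Qed.

Lemma wmean_ge (y : R) : (forall i, y <= x i) -> y <= \sum_i w i * x i.
Proof.
move=> yx; rewrite -[y]mul1r -sum_w mulr_suml.
by apply: ler_sum => i _; rewrite ler_pM2l.
Qed.

Lemma wmean_deficit i : w i * (1 - x i) <= 1 - \sum_j w j * x j.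
Proof.
have -> : 1 - \sum_j w j * x j = \sum_j w j * (1 - x j).
  by rewrite -{1}sum_w -sumrB; apply: eq_bigr => j _; rewrite mulrBr mulr1.
rewrite (bigD1 i) //= lerDl; apply: sumr_ge0 => j _.
by rewrite mulr_ge0 ?subr_ge0 ?x_le1 ?ltW.
Qed.

Lemma wmean_eq1 : \sum_i w i * x i = 1 -> forall i, x i = 1.
Proof.
move=> mean1 i; apply/le_anti; rewrite x_le1 /=.
have := wmean_deficit i; rewrite mean1 subrr => h.
by have := w_gt0 i; nra.
Qed.

Lemma wmean_near1 (e : R) i : 0 <= e ->
  1 - e * \big[Order.min/1]_j w j < \sum_j w j * x j -> 1 - e <= x i.
Proof.
move=> e_ge0 near1.
have : e * \big[Order.min/1]_j w j <= e * w i by rewrite ler_wpM2l ?bigmin_le.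
have := wmean_deficit i; have := w_gt0 i; nra.
Qed.

End weighted_mean.

Local Open Scope ereal_scope.

Section weighted_mean_probability.
Variables (R : realType) (d : measure_display) (T : measurableType d).
Variables (I : finType) (w : I -> R) (mu : I -> probability T R) (S : set T).
Hypotheses (w_gt0 : forall i, (0 < w i)%R) (sum_w : (\sum_i w i)%R = 1%R).
Hypothesis mS : measurable S.

Local Notation p i := (fine (mu i S)).

Let muE i : mu i S = (p i)%:E.
Proof. by rewrite fineK // fin_num_measure. Qed.

Let p_le1 i : (p i <= 1)%R.
Proof. by rewrite -lee_fin -muE probability_le1. Qed.

Let wmeanE : \sum_i (w i)%:E * mu i S = (\sum_i w i * p i)%:E.
Proof. by rewrite -sumEFin; apply: eq_bigr => i _; rewrite muE. Qed.

Let bigmine_geP (y : \bar R) :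
  y <= \big[mine/+oo]_i mu i S <-> forall i, y <= mu i S.
Proof.
split => [/bigmin_geP[_ ymu] i|ymu]; first exact: ymu.
by apply/bigmin_geP; split => [|i _]; [exact: leey|exact: ymu].
Qed.

Let i0 : I.
Proof.
case: (pickP (@predT I)) => [i _ //|noI].
by move: sum_w; rewrite big_pred0 // => /esym/eqP; rewrite oner_eq0.
Qed.

Lemma bigmine_le_wmean :
  \big[mine/+oo]_i mu i S <= \sum_i (w i)%:E * mu i S.
Proof.
have /bigmine_geP := lexx (\big[mine/+oo]_i mu i S).
case: (\big[mine/+oo]_i mu i S) => [y| |] ymu; last exact: leNye.
  by rewrite wmeanE lee_fin; apply: wmean_ge => // i; rewrite -lee_fin -muE.
by have := ymu i0; rewrite muE leye_eq.
Qed.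

Lemma wmean_prob_le1 : \sum_i (w i)%:E * mu i S <= 1.
Proof. by rewrite wmeanE lee_fin wmean_le1. Qed.

Lemma wmean_prob_eq1 :
  \sum_i (w i)%:E * mu i S = 1 <-> \big[mine/+oo]_i mu i S = 1.
Proof.
split => [|min1].
  rewrite wmeanE => -[/(wmean_eq1 w_gt0 sum_w p_le1) p1].
  apply/le_anti; apply/andP; split.
    by apply: (le_trans (bigmin_le _ i0 _)); rewrite muE p1.
  by apply/bigmine_geP => i; rewrite muE p1.
apply/le_anti; rewrite wmean_prob_le1 -min1 /=; exact: bigmine_le_wmean.
Qed.

Lemma wmean_prob_near1 (e : R) : (0 <= e)%R ->
  (1 - e * \big[Order.min/1%R]_i w i)%:E < \sum_i (w i)%:E * mu i S ->
  (1 - e)%:E <= \big[mine/+oo]_i mu i S.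
Proof.
rewrite wmeanE lte_fin => e_ge0 near1; apply/bigmine_geP => i.
by rewrite muE lee_fin (wmean_near1 w_gt0 sum_w p_le1).
Qed.

End weighted_mean_probability.

Section ereal_sup_eq1.
Variables (R : realType) (X : Type) (D : set X) (u v : X -> \bar R) (c : R).
Hypotheses (c_gt0 : (0 < c)%R) (u_le_v : forall x, D x -> u x <= v x).
Hypothesis v_le1 : forall x, D x -> v x <= 1.
Hypothesis v_near1 : forall (e : R) x, (0 < e)%R -> D x ->
  (1 - e * c)%:E < v x -> (1 - e)%:E <= u x.

Lemma ereal_sup_eq1_transfer :
  ereal_sup (u @` D) = 1 <-> ereal_sup (v @` D) = 1.
Proof.
have supv_le1 : ereal_sup (v @` D) <= 1.
  by apply: ge_ereal_sup => _ [x Dx <-]; exact: v_le1.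
have supu_le_supv : ereal_sup (u @` D) <= ereal_sup (v @` D).
  apply: ge_ereal_sup => _ [x Dx <-]; apply: ereal_sup_ge.
  by exists (v x); [exists x|exact: u_le_v].
split => [supu1|supv1].
  by apply/le_anti; rewrite supv_le1 /= -supu1.
apply/le_anti; rewrite (le_trans supu_le_supv supv_le1) /=.
apply/lee_addgt0Pr => e e_gt0; rewrite -leeBlDr // -EFinB.
have : (1 - e * c)%:E < ereal_sup (v @` D).
  by rewrite supv1 lte_fin; have := mulr_gt0 e_gt0 c_gt0; lra.
move=> /ereal_sup_gt[_ [x Dx <-] near1]; apply: ereal_sup_ge.
by exists (u x); [exists x|exact: v_near1].
Qed.

End ereal_sup_eq1.

Theorem mainTheorem1 (R : realType) (Q A E : finType) (a0 : A)
    (delta : E -> Q -> A -> Q -> R)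
    (hdelta : forall e, is_transition (delta e))
    (q : Q) (f : Q -> nat) (b : E -> R)
    (hb : is_dist b) (hsupp : forall e, (0 < b e)%R)
    (P : E -> (finrun Q A -> A -> R) -> Q -> probability (Runs q a0) R)
    (hP : forall e sigma q', is_strategy sigma ->
            is_run_measure (delta e) sigma q' (P e sigma q')) :
  let W := @on_states Q A q a0 (parity f) in
  let val_uni sigma := \big[mine/+oo]_(e : E) P e sigma q W in
  let val_pr sigma := \sum_(e : E) (b e)%:E * P e sigma q W in
  (ereal_sup [set val_uni sigma | sigma in @is_strategy R Q A] = 1
     <-> ereal_sup [set val_pr sigma | sigma in @is_strategy R Q A] = 1)
  /\ (forall sigma, is_strategy sigma -> (val_uni sigma = 1 <-> val_pr sigma = 1)).
Proof.
move=> W val_uni val_pr.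
have mW : measurable W by exact: measurable_parity.
have [_ sum_b] := hb.
split => [|sigma _]; last exact: iff_sym (wmean_prob_eq1 _ hsupp sum_b mW).
apply: (@ereal_sup_eq1_transfer _ _ _ _ _ (\big[Order.min/1%R]_e b e)).
- by apply/bigmin_gtP.
- by move=> sigma _; exact: bigmine_le_wmean hsupp sum_b mW.
- by move=> sigma _; exact: wmean_prob_le1 hsupp sum_b mW.
- by move=> e sigma e_gt0 _; exact: wmean_prob_near1 hsupp sum_b mW _ (ltW e_gt0).
Qed.
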